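(* Let $(G_1,s_1,t_1)$ and $(G_2,s_2,t_2)$ be TTSPGs, $L_1=(G_1,l_1)$, $L_2=(G_2,l_2)$ linkages, $(G,s_2,t_1)=(G_1,s_1,t_1)\circ(G_2,s_2,t_2)$, and $L=(G,l)$ with $l$ restricting to $l_1$ on edges from $G_1$ and to $l_2$ on edges from $G_2$. Suppose $M(L)\neq\emptyset$. Then $M(L)$ is connected if and only if both $M(L_1)$ and $M(L_2)$ are connected.
   Context: A graph has a finite vertex set and a finite multiset of edges that are unordered pairs of distinct vertices. A linkage is $L=(G,l)$ with $l:E\to\mathbb R_{\ge0}$; $C(L)=\{p:V\to\mathbb R^2:|p(u)-p(v)|=l(\{u,v\})\ \forall\{u,v\}\in E\}\subseteq\mathbb R^{2|V|}$, and $M(L)$ is the quotient of $C(L)$ by the group of orientation preserving isometries of $\mathbb R^2$ (quotient topology). TTG: $(G,s,t)$ with $s\ne t$; series composition $(G_1,s_1,t_1)\circ(G_2,s_2,t_2)=(G_1\cup_{t_2\sim s_1}G_2,s_2,t_1)$ (disjoint union with $t_2$ identified to $s_1$); parallel composition $(G_1,s_1,t_1)\|(G_2,s_2,t_2)=(G_1\cup_{s_1\sim s_2,t_1\sim t_2}G_2,s_1,t_1)$. TTSPGs: the smallest class of TTGs containing a single edge $(K_2,s,t)$ and closed under both compositions. *)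

From Stdlib Require Import Reals List Arith.
Import ListNotations.
Open Scope R_scope.

(* A graph has vertex set {0,...,nv-1} and a finite multiset (list) of edges,
   each an (unordered) pair of vertices. *)
Record graph := mkGraph { nv : nat ; edges : list (nat * nat) }.

(* Series composition (G1,s1,t1) o (G2,s2,t2): disjoint union with t2 identified
   to s1. *)
Definition ser_map (n1 s1 t2 v : nat) : nat :=
  if Nat.eqb v t2 then s1
  else if Nat.ltb v t2 then (n1 + v)%nat else (n1 + v - 1)%nat.

Definition ser (G1 : graph) (s1 : nat) (G2 : graph) (t2 : nat) : graph :=
  mkGraph (nv G1 + nv G2 - 1)
    (edges G1 ++ map (fun e => (ser_map (nv G1) s1 t2 (fst e),
                                ser_map (nv G1) s1 t2 (snd e))) (edges G2)).

Definition par_map (n1 s1 t1 s2 t2 v : nat) : nat :=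
  if Nat.eqb v s2 then s1
  else if Nat.eqb v t2 then t1
  else (n1 + v - (if Nat.ltb s2 v then 1 else 0) - (if Nat.ltb t2 v then 1 else 0))%nat.

Definition par (G1 : graph) (s1 t1 : nat) (G2 : graph) (s2 t2 : nat) : graph :=
  mkGraph (nv G1 + nv G2 - 2)
    (edges G1 ++ map (fun e => (par_map (nv G1) s1 t1 s2 t2 (fst e),
                                par_map (nv G1) s1 t1 s2 t2 (snd e))) (edges G2)).

Inductive ttspg : graph -> nat -> nat -> Prop :=
| ttspg_edge : ttspg (mkGraph 2 [(0%nat, 1%nat)]) 0%nat 1%nat
| ttspg_ser : forall G1 s1 t1 G2 s2 t2,
    ttspg G1 s1 t1 -> ttspg G2 s2 t2 ->
    ttspg (ser G1 s1 G2 t2) (ser_map (nv G1) s1 t2 s2) t1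
| ttspg_par : forall G1 s1 t1 G2 s2 t2,
    ttspg G1 s1 t1 -> ttspg G2 s2 t2 ->
    ttspg (par G1 s1 t1 G2 s2 t2) s1 t1.

Definition dist2 (a b : R * R) : R :=
  sqrt ((fst a - fst b) ^ 2 + (snd a - snd b) ^ 2).

(* A linkage is a graph G together with a list l of edge lengths (l[i] is the
   length of edges G [i]).  p : nat -> R*R is a configuration (only values on
   vertices < nv G matter) iff every edge has the prescribed length. *)
Definition config (G : graph) (l : list R) (p : nat -> R * R) : Prop :=
  Forall2 (fun e r => dist2 (p (fst e)) (p (snd e)) = r) (edges G) l.

(* Orientation preserving isometries of R^2: x |-> Rot x + b. *)
Definition rigid (f : R * R -> R * R) : Prop :=
  exists c s a b, c ^ 2 + s ^ 2 = 1 /\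
    forall x y, f (x, y) = (c * x - s * y + a, s * x + c * y + b).

(* p and q represent the same point of M(L) (n = number of vertices). *)
Definition equiv (n : nat) (p q : nat -> R * R) : Prop :=
  exists f, rigid f /\ forall v, (v < n)%nat -> q v = f (p v).

(* Topology on R^{2n} restricted to C : max over vertices of Euclidean dist. *)
Definition close (n : nat) (p q : nat -> R * R) (eps : R) : Prop :=
  forall v, (v < n)%nat -> dist2 (p v) (q v) < eps.

Definition rel_open (n : nat) (C A : (nat -> R * R) -> Prop) : Prop :=
  forall p, C p -> A p ->
    exists eps, 0 < eps /\ forall q, C q -> close n p q eps -> A q.

Definition saturated (n : nat) (C A : (nat -> R * R) -> Prop) : Prop :=
  forall p q, C p -> C q -> equiv n p q -> A p -> A q.

(* Connectedness of the quotient C / equiv with the quotient topology: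
   open subsets of M correspond to saturated relatively open subsets of C, so
   M is connected iff every saturated subset of C that is relatively clopen in
   C is empty or all of C. *)
Definition M_connected (n : nat) (C : (nat -> R * R) -> Prop) : Prop :=
  forall A, saturated n C A -> rel_open n C A -> rel_open n C (fun p => ~ A p) ->
    (forall p, C p -> A p) \/ (forall p, C p -> ~ A p).

(* A configuration of the series composition is a configuration q1 of L1 together with a
   configuration q2 of L2 translated so that t2 lands on q1 s1 ([glue]), and every configuration
   splits this way.  Hence M(L1) and M(L2) are continuous images of M(L), the sections existing
   because M(L) is nonempty.  Conversely, a saturated clopen set A of configurations that contains
   some p0 contains every p: move the L1 part from p0 to p inside M(L1) keeping the L2 part, then
   the L2 part inside M(L2).  These slices of A are saturated because an isometry of the glued
   configuration acts on the L2 part only through its rotation, and rotating the L2 part about the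
   cut vertex cannot leave A, the circle of rotation angles being connected. *)

From Stdlib Require Import Reals Rgeom Lra Lia Psatz List Arith Classical ClassicalEpsilon.
Open Scope R_scope.

Lemma R_clopen_full (S : R -> Prop) :
  (forall x, S x -> exists d, 0 < d /\ forall y, Rabs (y - x) < d -> S y) ->
  (forall x, ~ S x -> exists d, 0 < d /\ forall y, Rabs (y - x) < d -> ~ S y) ->
  forall a b, S a -> S b.
Proof.
  intros S_open S_closed a b Sa. apply NNPP; intro Sb.
  assert (S_loc : forall x, exists d, 0 < d /\ forall y, Rabs (y - x) < d -> (S y <-> S x)).
  { intros x. destruct (classic (S x)) as [Sx|Sx].
    - destruct (S_open x Sx) as [d [Hd H]]. exists d; split; [exact Hd|]. intros y Hy; split; auto.
    - destruct (S_closed x Sx) as [d [Hd H]]. exists d; split; [exact Hd|].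
      intros y Hy; split; [intro Sy; now destruct (H y Hy)|tauto]. }
  set (f x := if excluded_middle_informative (S x) then 1 else -1).
  assert (f_cont : continuity f).
  { intros x e He. destruct (S_loc x) as [d [Hd H]]. exists d; split; [exact Hd|].
    intros y [_ Hy]. specialize (H y Hy). unfold f; simpl; unfold Rdist.
    destruct (excluded_middle_informative (S y)), (excluded_middle_informative (S x)); try tauto;
      rewrite Rminus_diag, Rabs_R0; exact He. }
  assert (f_ne0 : forall z, f z <> 0).
  { intro z. unfold f. destruct (excluded_middle_informative (S z)); lra. }
  assert (fab : f a * f b <= 0).
  { unfold f. destruct (excluded_middle_informative (S a)), (excluded_middle_informative (S b));
      try tauto; lra. }
  destruct (Rle_lt_dec a b) as [Hab|Hba].
  - destruct (IVT_cor f a b f_cont Hab fab) as [z [_ Hz]]. exact (f_ne0 z Hz).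
  - destruct (IVT_cor f b a f_cont (Rlt_le _ _ Hba) ltac:(lra)) as [z [_ Hz]]. exact (f_ne0 z Hz).
Qed.

Lemma unit_circle_angle c s : c ^ 2 + s ^ 2 = 1 -> exists t, cos t = c /\ sin t = s.
Proof.
  intros H. assert (Hc : -1 <= c <= 1) by nra.
  assert (Hs : sqrt (1 - c²) = Rabs s).
  { replace (1 - c²) with (s²) by (unfold Rsqr; nra). apply sqrt_Rsqr_abs. }
  destruct (Rle_dec 0 s).
  - exists (acos c). rewrite cos_acos, sin_acos by lra. rewrite Hs, Rabs_right; lra.
  - exists (- acos c). rewrite cos_neg, sin_neg, cos_acos, sin_acos by lra.
    rewrite Hs, Rabs_left; lra.
Qed.

Lemma cos_sin_near t e : 0 < e -> exists d, 0 < d /\ forall u, Rabs (u - t) < d ->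
  Rabs (cos u - cos t) < e /\ Rabs (sin u - sin t) < e.
Proof.
  intros He.
  assert (near : forall f, continuity_pt f t ->
    exists d, 0 < d /\ forall u, Rabs (u - t) < d -> Rabs (f u - f t) < e).
  { intros f Hf. destruct (Hf e He) as [d [Hd H]]. exists d; split; [lra|].
    intros u Hu. destruct (Req_dec u t) as [->|Hne].
    - rewrite Rminus_diag, Rabs_R0; exact He.
    - apply (H u). split; [split; [exact I|congruence]|exact Hu]. }
  destruct (near cos (continuity_cos t)) as [d1 [Hd1 H1]].
  destruct (near sin (continuity_sin t)) as [d2 [Hd2 H2]].
  exists (Rmin d1 d2). split; [apply Rmin_pos; assumption|]. intros u Hu.
  pose proof (Rmin_l d1 d2); pose proof (Rmin_r d1 d2). split; [apply H1|apply H2]; lra.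
Qed.

Definition padd (a b : R * R) : R * R := (fst a + fst b, snd a + snd b).
Definition psub (a b : R * R) : R * R := (fst a - fst b, snd a - snd b).
Definition rotp (c s : R) (a : R * R) : R * R := (c * fst a - s * snd a, s * fst a + c * snd a).

Lemma pair_eq (a b : R * R) : fst a = fst b -> snd a = snd b -> a = b.
Proof. destruct a, b; simpl; intros; subst; reflexivity. Qed.

Ltac point_ring := apply pair_eq; unfold padd, psub, rotp; simpl; ring.

Lemma rotp_inv c s a : c ^ 2 + s ^ 2 = 1 -> rotp c (- s) (rotp c s a) = a.
Proof.
  intros H. unfold rotp; apply pair_eq; simpl.
  - transitivity ((c ^ 2 + s ^ 2) * fst a); [ring|]. rewrite H; ring.
  - transitivity ((c ^ 2 + s ^ 2) * snd a); [ring|]. rewrite H; ring.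
Qed.

Lemma dist2_nonneg a b : 0 <= dist2 a b.
Proof. apply sqrt_pos. Qed.

Lemma dist2_refl a : dist2 a a = 0.
Proof.
  unfold dist2. rewrite !Rminus_diag. replace (0 ^ 2 + 0 ^ 2) with 0 by ring. apply sqrt_0.
Qed.

Lemma dist2_psub_eq a b a' b' : psub a b = psub a' b' -> dist2 a b = dist2 a' b'.
Proof.
  intros H. unfold dist2.
  rewrite (f_equal fst H : fst a - fst b = fst a' - fst b'), (f_equal snd H : snd a - snd b = _).
  reflexivity.
Qed.

Lemma dist2_sym a b : dist2 a b = dist2 b a.
Proof. unfold dist2. f_equal. ring. Qed.

Lemma dist2_triangle a b c : dist2 a c <= dist2 a b + dist2 b c.
Proof.
  assert (E : forall u v, dist2 u v = dist_euc (fst u) (snd u) (fst v) (snd v)).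
  { intros. unfold dist2, dist_euc, Rsqr. f_equal. ring. }
  rewrite !E. apply triangle.
Qed.

Lemma dist2_psub a a' b b' : dist2 (psub a b) (psub a' b') <= dist2 a a' + dist2 b b'.
Proof.
  rewrite (dist2_sym b b').
  replace (dist2 a a') with (dist2 (psub a b) (psub a' b)) by (apply dist2_psub_eq; point_ring).
  replace (dist2 b' b) with (dist2 (psub a' b) (psub a' b')) by (apply dist2_psub_eq; point_ring).
  apply dist2_triangle.
Qed.

Lemma dist2_rotp c s a b : c ^ 2 + s ^ 2 = 1 -> dist2 (rotp c s a) (rotp c s b) = dist2 a b.
Proof.
  intros H. unfold dist2, rotp; simpl. f_equal.
  transitivity ((c ^ 2 + s ^ 2) * ((fst a - fst b) ^ 2 + (snd a - snd b) ^ 2)); [ring|].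
  rewrite H; ring.
Qed.

Lemma dist2_rotp_angle c s c' s' w :
  dist2 (rotp c s w) (rotp c' s' w) = dist2 (c, s) (c', s') * dist2 w (0, 0).
Proof.
  unfold dist2. rewrite <- sqrt_mult by (apply Rplus_le_le_0_compat; apply pow2_ge_0).
  f_equal. unfold rotp; simpl. ring.
Qed.

Lemma dist2_le_abs a b : dist2 a b <= Rabs (fst a - fst b) + Rabs (snd a - snd b).
Proof.
  unfold dist2. set (x := fst a - fst b). set (y := snd a - snd b).
  pose proof (Rabs_pos x) as Hx. pose proof (Rabs_pos y) as Hy.
  rewrite <- (sqrt_Rsqr (Rabs x + Rabs y)) by lra. apply sqrt_le_1_alt.
  rewrite <- (pow2_abs x), <- (pow2_abs y). unfold Rsqr.
  pose proof (Rmult_le_pos _ _ Hx Hy). lra.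
Qed.

Lemma nat_fun_bounded (f : nat -> R) n : exists K, 0 <= K /\ forall v, (v < n)%nat -> f v <= K.
Proof.
  induction n as [|n [K [HK H]]].
  - exists 0. split; [lra|]. intros v Hv. lia.
  - exists (Rmax K (f n)). split; [eapply Rle_trans; [exact HK|apply Rmax_l]|].
    intros v Hv. destruct (Nat.eq_dec v n) as [->|Hne]; [apply Rmax_r|].
    eapply Rle_trans; [apply H; lia|apply Rmax_l].
Qed.

Lemma rigid_form f : rigid f ->
  exists c s k, c ^ 2 + s ^ 2 = 1 /\ forall x, f x = padd (rotp c s x) k.
Proof.
  intros [c [s [a [b [H Hf]]]]]. exists c, s, (a, b). split; [exact H|].
  intros [x y]. rewrite Hf. point_ring.
Qed.

Lemma rigid_rotp_padd c s k : c ^ 2 + s ^ 2 = 1 -> rigid (fun x => padd (rotp c s x) k).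
Proof. intros H. exists c, s, (fst k), (snd k). split; [exact H|]. intros x y. point_ring. Qed.

Lemma rigid_padd k : rigid (fun x => padd x k).
Proof. exists 1, 0, (fst k), (snd k). split; [ring|]. intros x y. point_ring. Qed.

Lemma rigid_dist2 f a b : rigid f -> dist2 (f a) (f b) = dist2 a b.
Proof.
  intros Hf. destruct (rigid_form f Hf) as [c [s [k [Hcs Hk]]]]. rewrite !Hk.
  rewrite (dist2_psub_eq _ _ (rotp c s a) (rotp c s b)) by point_ring.
  apply dist2_rotp, Hcs.
Qed.

Lemma equiv_pw n p q : (forall v, (v < n)%nat -> q v = p v) -> equiv n p q.
Proof.
  intros H. exists (fun x => padd x (0, 0)). split; [apply rigid_padd|].
  intros v Hv. rewrite H by exact Hv. point_ring.
Qed.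

Lemma equiv_sym n p q : equiv n p q -> equiv n q p.
Proof.
  intros [f [Hf Hq]]. destruct (rigid_form f Hf) as [c [s [k [Hcs Hk]]]].
  exists (fun x => padd (rotp c (- s) x) (rotp c (- s) (psub (0, 0) k))).
  split; [apply rigid_rotp_padd; nra|].
  intros v Hv. rewrite Hq, Hk by exact Hv.
  rewrite <- (rotp_inv c s (p v)) at 1 by exact Hcs. point_ring.
Qed.

Lemma equiv_reindex n n' (h : nat -> nat) p q : (forall v, (v < n')%nat -> (h v < n)%nat) ->
  equiv n p q -> equiv n' (fun v => p (h v)) (fun v => q (h v)).
Proof. intros Hh [f [Hf Hq]]. exists f. split; [exact Hf|]. intros v Hv. apply Hq, Hh, Hv. Qed.

Lemma close_reindex n n' (h : nat -> nat) p q e : (forall v, (v < n')%nat -> (h v < n)%nat) ->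
  close n p q e -> close n' (fun v => p (h v)) (fun v => q (h v)) e.
Proof. intros Hh H v Hv. apply H, Hh, Hv. Qed.

Definition cfg_continuous (n n' : nat) (C : (nat -> R * R) -> Prop)
    (F : (nat -> R * R) -> nat -> R * R) : Prop :=
  forall p, C p -> forall e, 0 < e ->
    exists d, 0 < d /\ forall q, C q -> close n p q d -> close n' (F p) (F q) e.

Lemma rel_open_preimage n n' C C' A F : rel_open n' C' A ->
  (forall p, C p -> C' (F p)) -> cfg_continuous n n' C F ->
  rel_open n C (fun p => A (F p)).
Proof.
  intros HA HF Hc p Cp Ap. destruct (HA (F p) (HF p Cp) Ap) as [e [He Hq]].
  destruct (Hc p Cp e He) as [d [Hd Hd']]. exists d; split; [exact Hd|].
  intros q Cq Hpq. apply Hq; auto.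
Qed.

Lemma saturated_pw n C A p q : saturated n C A -> C p -> C q ->
  (forall v, (v < n)%nat -> q v = p v) -> A p -> A q.
Proof. intros HS Cp Cq Hpq. apply (HS p q Cp Cq), equiv_pw, Hpq. Qed.

Lemma M_connected_reindex n n' C C' (h : nat -> nat) (sec : (nat -> R * R) -> nat -> R * R) :
  (forall v, (v < n')%nat -> (h v < n)%nat) ->
  (forall p, C p -> C' (fun v => p (h v))) ->
  (forall q, C' q -> C (sec q) /\ equiv n' q (fun v => sec q (h v))) ->
  M_connected n C -> M_connected n' C'.
Proof.
  intros Hh HC Hsec HM A HS HO HO'.
  assert (Hcont : cfg_continuous n n' C (fun p v => p (h v))).
  { intros p _ e He. exists e; split; [exact He|]. intros q _. apply close_reindex, Hh. }
  destruct (HM (fun p => A (fun v => p (h v)))) as [Hall|Hnone].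
  - intros p q Cp Cq Hpq. apply HS; auto. apply (equiv_reindex n); assumption.
  - exact (rel_open_preimage _ _ _ _ _ _ HO HC Hcont).
  - exact (rel_open_preimage _ _ _ _ _ _ HO' HC Hcont).
  - left. intros q Cq. destruct (Hsec q Cq) as [Cs Hq].
    apply (HS _ q (HC _ Cs) Cq (equiv_sym _ _ _ Hq)), Hall, Cs.
  - right. intros q Cq Aq. destruct (Hsec q Cq) as [Cs Hq].
    apply (Hnone _ Cs), (HS q _ Cq (HC _ Cs) Hq Aq).
Qed.

Lemma M_connected_slice n n' C C' A F : M_connected n' C' ->
  saturated n' C' (fun q => A (F q)) -> rel_open n C A -> rel_open n C (fun p => ~ A p) ->
  (forall q, C' q -> C (F q)) -> cfg_continuous n' n C' F ->
  forall q0 q, C' q0 -> A (F q0) -> C' q -> A (F q).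
Proof.
  intros HM HS HO HO' HF Hc q0 q Cq0 Aq0 Cq.
  destruct (HM (fun q => A (F q)) HS (rel_open_preimage _ _ _ _ _ _ HO HF Hc)
              (rel_open_preimage _ _ _ _ _ _ HO' HF Hc)) as [Hall|Hnone].
  - exact (Hall q Cq).
  - exfalso. exact (Hnone q0 Cq0 Aq0).
Qed.

Definition edges_in (G : graph) : Prop :=
  Forall (fun e => (fst e < nv G)%nat /\ (snd e < nv G)%nat) (edges G).

Lemma ser_map_lt n1 s1 t2 n2 v : (s1 < n1)%nat -> (t2 < n2)%nat -> (v < n2)%nat ->
  (ser_map n1 s1 t2 v < n1 + n2 - 1)%nat.
Proof.
  intros. unfold ser_map. destruct (Nat.eqb_spec v t2); [lia|].
  destruct (Nat.ltb_spec v t2); lia.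
Qed.

Lemma par_map_lt n1 s1 t1 s2 t2 n2 v : (s1 < n1)%nat -> (t1 < n1)%nat ->
  (s2 < n2)%nat -> (t2 < n2)%nat -> s2 <> t2 -> (v < n2)%nat ->
  (par_map n1 s1 t1 s2 t2 v < n1 + n2 - 2)%nat.
Proof.
  intros. unfold par_map. destruct (Nat.eqb_spec v s2); [lia|].
  destruct (Nat.eqb_spec v t2); [lia|].
  destruct (Nat.ltb_spec s2 v), (Nat.ltb_spec t2 v); lia.
Qed.

Lemma edges_in_map G n (h : nat -> nat) :
  edges_in G -> (forall v, (v < nv G)%nat -> (h v < n)%nat) ->
  Forall (fun e => (fst e < n)%nat /\ (snd e < n)%nat)
    (map (fun e => (h (fst e), h (snd e))) (edges G)).
Proof.
  intros HG Hh. apply Forall_map. eapply Forall_impl; [|exact HG].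
  simpl; intros e [? ?]; split; apply Hh; assumption.
Qed.

Lemma ttspg_wf G s t : ttspg G s t ->
  (s < nv G)%nat /\ (t < nv G)%nat /\ s <> t /\ edges_in G.
Proof.
  unfold edges_in.
  induction 1 as [| G1 s1 t1 G2 s2 t2 _ [Hs1 [Ht1 [_ W1]]] _ [Hs2 [Ht2 [Hst2 W2]]]
                  | G1 s1 t1 G2 s2 t2 _ [Hs1 [Ht1 [Hst1 W1]]] _ [Hs2 [Ht2 [Hst2 W2]]]]; simpl.
  - repeat split; try lia. repeat constructor; simpl; lia.
  - assert (Hs : ser_map (nv G1) s1 t2 s2 <> s1 /\ (nv G1 <= ser_map (nv G1) s1 t2 s2)%nat).
    { unfold ser_map. destruct (Nat.eqb_spec s2 t2); [lia|]. destruct (Nat.ltb_spec s2 t2); lia. }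
    repeat split; [apply ser_map_lt; lia | lia | lia |].
    apply Forall_app; split.
    + eapply Forall_impl; [|exact W1]. simpl; intros e [? ?]; lia.
    + apply edges_in_map; [exact W2|]. intros v Hv. apply ser_map_lt; lia.
  - repeat split; try lia. apply Forall_app; split.
    + eapply Forall_impl; [|exact W1]. simpl; intros e [? ?]; lia.
    + apply edges_in_map; [exact W2|]. intros v Hv. apply par_map_lt; lia.
Qed.

Lemma config_ext G l p q : edges_in G ->
  (forall v, (v < nv G)%nat -> p v = q v) -> config G l p -> config G l q.
Proof.
  unfold config, edges_in. intros HG Hpq H.
  induction H as [|e r l l' He Hr IH]; constructor; inversion HG as [|? ? [Ha Hb] HG']; subst; auto.
  rewrite <- !Hpq by assumption. reflexivity.
Qed.

Lemma config_rigid G l q f : rigid f -> config G l q -> config G l (fun v => f (q v)).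
Proof.
  unfold config. intros Hf H. eapply Forall2_impl; [|exact H]. simpl.
  intros e r <-. apply rigid_dist2, Hf.
Qed.

Lemma Forall2_map_l {A B C} (P : B -> C -> Prop) (h : A -> B) l l' :
  Forall2 P (map h l) l' <-> Forall2 (fun x y => P (h x) y) l l'.
Proof.
  revert l'; induction l; intros l'; simpl; split; intros H; inversion H; subst;
    constructor; auto; apply IHl; auto.
Qed.

Lemma app_inj_length {A} (a b c d : list A) :
  length a = length b -> a ++ c = b ++ d -> a = b /\ c = d.
Proof.
  revert b; induction a as [|x a IH]; intros [|y b]; simpl; intros Hl He; try discriminate; auto.
  injection He as -> He. destruct (IH b ltac:(lia) He) as [-> ->]. auto.
Qed.

Lemma config_ser G1 s1 G2 t2 l1 l2 p : length l1 = length (edges G1) ->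
  config (ser G1 s1 G2 t2) (l1 ++ l2) p <->
  config G1 l1 p /\ config G2 l2 (fun v => p (ser_map (nv G1) s1 t2 v)).
Proof.
  unfold config; simpl. intros Hl.
  pose proof (Forall2_map_l (fun e r => dist2 (p (fst e)) (p (snd e)) = r)
                (fun e => (ser_map (nv G1) s1 t2 (fst e), ser_map (nv G1) s1 t2 (snd e)))
                (edges G2) l2) as Hmap.
  split.
  - intros H. apply Forall2_app_inv_l in H as [m1 [m2 [H1 [H2 E]]]].
    apply app_inj_length in E as [-> ->]; [|rewrite <- (Forall2_length H1); exact Hl].
    split; [exact H1|]. apply Hmap, H2.
  - intros [H1 H2]. apply Forall2_app; [exact H1|]. apply Hmap, H2.
Qed.

Definition rot_cfg (c s : R) (q : nat -> R * R) (v : nat) : R * R := rotp c s (q v).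

Section Glue.
Variables n1 s1 t2 : nat.

Definition ser_unmap (v : nat) : nat :=
  if (v - n1 <? t2)%nat then (v - n1)%nat else (v - n1 + 1)%nat.

Definition glue (q1 q2 : nat -> R * R) (v : nat) : R * R :=
  if (v <? n1)%nat then q1 v else padd (q1 s1) (psub (q2 (ser_unmap v)) (q2 t2)).

Lemma ser_unmap_lt n2 v : (t2 < n2)%nat -> (n1 <= v)%nat -> (v < n1 + n2 - 1)%nat ->
  (ser_unmap v < n2)%nat.
Proof. intros. unfold ser_unmap. destruct (Nat.ltb_spec (v - n1) t2); lia. Qed.

Lemma ser_map_unmap v : (n1 <= v)%nat -> ser_map n1 s1 t2 (ser_unmap v) = v.
Proof.
  intros Hv. unfold ser_unmap, ser_map. destruct (Nat.ltb_spec (v - n1) t2).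
  - destruct (Nat.eqb_spec (v - n1) t2); [lia|]. destruct (Nat.ltb_spec (v - n1) t2); lia.
  - destruct (Nat.eqb_spec (v - n1 + 1) t2); [lia|]. destruct (Nat.ltb_spec (v - n1 + 1) t2); lia.
Qed.

Lemma glue_restrict p v : glue p (fun u => p (ser_map n1 s1 t2 u)) v = p v.
Proof.
  unfold glue. destruct (Nat.ltb_spec v n1); [reflexivity|].
  rewrite ser_map_unmap by lia. unfold ser_map. rewrite Nat.eqb_refl. point_ring.
Qed.

Lemma glue_ext_r n2 q1 q2 q2' v : (t2 < n2)%nat -> (forall u, (u < n2)%nat -> q2 u = q2' u) ->
  (v < n1 + n2 - 1)%nat -> glue q1 q2 v = glue q1 q2' v.
Proof.
  intros Ht H Hv. unfold glue. destruct (Nat.ltb_spec v n1); [reflexivity|].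
  rewrite !H by (try apply (ser_unmap_lt n2); assumption). reflexivity.
Qed.

Lemma glue_translate_r q1 q2 k v : glue q1 (fun u => padd (q2 u) k) v = glue q1 q2 v.
Proof. unfold glue. destruct (v <? n1)%nat; [reflexivity|point_ring]. Qed.

Lemma glue_rigid c s k q1 q2 v :
  glue (fun u => padd (rotp c s (q1 u)) k) (rot_cfg c s q2) v = padd (rotp c s (glue q1 q2 v)) k.
Proof. unfold glue, rot_cfg. destruct (v <? n1)%nat; [reflexivity|point_ring]. Qed.

Lemma glue_close_r n2 q1 q2 q2' d : (t2 < n2)%nat -> close n2 q2 q2' d ->
  close (n1 + n2 - 1) (glue q1 q2) (glue q1 q2') (2 * d).
Proof.
  intros Ht H v Hv. unfold glue. destruct (Nat.ltb_spec v n1).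
  - rewrite dist2_refl. pose proof (dist2_nonneg (q2 t2) (q2' t2)). pose proof (H t2 Ht). lra.
  - set (u := ser_unmap v).
    assert (Hu : (u < n2)%nat) by (apply (ser_unmap_lt n2); lia).
    rewrite (dist2_psub_eq _ _ (psub (q2 u) (q2 t2)) (psub (q2' u) (q2' t2))) by point_ring.
    pose proof (dist2_psub (q2 u) (q2' u) (q2 t2) (q2' t2)).
    pose proof (H u Hu). pose proof (H t2 Ht). lra.
Qed.

Lemma glue_rot_continuous n2 q1 q2 t e : (t2 < n2)%nat -> 0 < e ->
  exists d, 0 < d /\ forall u, Rabs (u - t) < d ->
    close (n1 + n2 - 1) (glue q1 (rot_cfg (cos t) (sin t) q2))
                        (glue q1 (rot_cfg (cos u) (sin u) q2)) e.
Proof.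
  intros Ht He.
  destruct (nat_fun_bounded (fun v => dist2 (psub (q2 v) (q2 t2)) (0, 0)) n2) as [K [HK HKb]].
  set (eta := e / (2 * K + 1)).
  assert (Heta : 0 < eta) by (apply Rdiv_lt_0_compat; lra).
  assert (HetaK : 2 * eta * K < e).
  { unfold eta. apply (Rmult_lt_reg_r (2 * K + 1)); [lra|]. field_simplify; lra. }
  destruct (cos_sin_near t eta Heta) as [d [Hd Hcs]]. exists d; split; [exact Hd|].
  intros u Hu v Hv. unfold glue. destruct (Nat.ltb_spec v n1); [rewrite dist2_refl; lra|].
  set (w := psub (q2 (ser_unmap v)) (q2 t2)).
  assert (Hw : dist2 w (0, 0) <= K) by (apply HKb, (ser_unmap_lt n2); lia).
  assert (Hangle : dist2 (cos t, sin t) (cos u, sin u) < 2 * eta).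
  { destruct (Hcs u Hu) as [Hc Hs]. eapply Rle_lt_trans; [apply dist2_le_abs|]. simpl.
    rewrite (Rabs_minus_sym (cos t)), (Rabs_minus_sym (sin t)). lra. }
  unfold rot_cfg.
  rewrite (dist2_psub_eq _ _ (rotp (cos t) (sin t) w) (rotp (cos u) (sin u) w))
    by (unfold w; point_ring).
  rewrite dist2_rotp_angle.
  pose proof (dist2_nonneg w (0, 0)). pose proof (dist2_nonneg (cos t, sin t) (cos u, sin u)).
  nra.
Qed.

Hypothesis Hs1 : (s1 < n1)%nat.

Lemma glue_ser_map q1 q2 v :
  glue q1 q2 (ser_map n1 s1 t2 v) = padd (q1 s1) (psub (q2 v) (q2 t2)).
Proof.
  unfold glue, ser_map. destruct (Nat.eqb_spec v t2) as [->|Hne].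
  - destruct (Nat.ltb_spec s1 n1); [point_ring|lia].
  - destruct (Nat.ltb_spec v t2).
    + destruct (Nat.ltb_spec (n1 + v) n1); [lia|]. unfold ser_unmap.
      replace (n1 + v - n1)%nat with v by lia. destruct (Nat.ltb_spec v t2); [reflexivity|lia].
    + destruct (Nat.ltb_spec (n1 + v - 1) n1); [lia|]. unfold ser_unmap.
      destruct (Nat.ltb_spec (n1 + v - 1 - n1) t2); [lia|].
      replace (n1 + v - 1 - n1 + 1)%nat with v by lia. reflexivity.
Qed.

Lemma glue_ext_l q1 q1' q2 v : (forall u, (u < n1)%nat -> q1 u = q1' u) ->
  glue q1 q2 v = glue q1' q2 v.
Proof.
  intros H. unfold glue. destruct (Nat.ltb_spec v n1); rewrite !H by assumption; reflexivity.
Qed.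

Lemma glue_close_l N q1 q1' q2 d : close n1 q1 q1' d -> close N (glue q1 q2) (glue q1' q2) d.
Proof.
  intros H v _. unfold glue. destruct (Nat.ltb_spec v n1); [apply H; assumption|].
  rewrite (dist2_psub_eq _ _ (q1 s1) (q1' s1)) by point_ring. apply H, Hs1.
Qed.

End Glue.

Lemma cos_sin_unit t : cos t ^ 2 + sin t ^ 2 = 1.
Proof. pose proof (sin2_cos2 t) as H. unfold Rsqr in H. lra. Qed.

Lemma config_rot G l q c s : c ^ 2 + s ^ 2 = 1 -> config G l q -> config G l (rot_cfg c s q).
Proof.
  intros Hcs. apply (config_rigid G l q (rotp c s)).
  exists c, s, 0, 0. split; [exact Hcs|]. intros x y. point_ring.
Qed.

Section Series.
Variables (G1 G2 : graph) (s1 t2 : nat) (l1 l2 : list R).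
Hypotheses (Hs1 : (s1 < nv G1)%nat) (Ht2 : (t2 < nv G2)%nat)
  (W1 : edges_in G1) (W2 : edges_in G2) (Hl1 : length l1 = length (edges G1)).

Local Notation N := (nv G1 + nv G2 - 1)%nat.
Local Notation C := (config (ser G1 s1 G2 t2) (l1 ++ l2)).
Local Notation C1 := (config G1 l1).
Local Notation C2 := (config G2 l2).
Local Notation gl := (glue (nv G1) s1 t2).
Local Notation sm := (ser_map (nv G1) s1 t2).

Lemma config_split p : C p -> C1 p /\ C2 (fun v => p (sm v)).
Proof. apply config_ser, Hl1. Qed.

Lemma config_glue q1 q2 : C1 q1 -> C2 q2 -> C (gl q1 q2).
Proof.
  intros H1 H2. apply config_ser; [exact Hl1|]. split.
  - apply (config_ext G1 l1 q1); [exact W1| |exact H1].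
    intros v Hv. unfold glue. destruct (Nat.ltb_spec v (nv G1)); [reflexivity|lia].
  - apply (config_ext G2 l2 (fun v => padd (q2 v) (psub (q1 s1) (q2 t2)))); [exact W2| |].
    + intros v _. rewrite glue_ser_map by exact Hs1. point_ring.
    + apply (config_rigid G2 l2 q2 (fun x => padd x _)); [apply rigid_padd|exact H2].
Qed.

Lemma M_connected_ser_l : (exists p, C p) -> M_connected N C -> M_connected (nv G1) C1.
Proof.
  intros [p0 Cp0]. destruct (config_split p0 Cp0) as [_ C20].
  apply (M_connected_reindex N (nv G1) C C1 (fun v => v) (fun q => gl q (fun v => p0 (sm v)))).
  - intros v Hv. lia.
  - intros p Cp. apply config_split, Cp.
  - intros q Cq. split; [apply config_glue; assumption|].
    apply equiv_pw. intros v Hv. unfold glue. destruct (Nat.ltb_spec v (nv G1)); [reflexivity|lia].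
Qed.

Lemma M_connected_ser_r : (exists p, C p) -> M_connected N C -> M_connected (nv G2) C2.
Proof.
  intros [p0 Cp0]. destruct (config_split p0 Cp0) as [C10 _].
  apply (M_connected_reindex N (nv G2) C C2 sm (fun q => gl p0 q)).
  - intros v Hv. apply ser_map_lt; assumption.
  - intros p Cp. apply config_split, Cp.
  - intros q Cq. split; [apply config_glue; assumption|].
    exists (fun x => padd x (psub (p0 s1) (q t2))). split; [apply rigid_padd|].
    intros v _. rewrite glue_ser_map by exact Hs1. point_ring.
Qed.

Lemma slice_l_continuous q2 : cfg_continuous (nv G1) N C1 (fun q1 => gl q1 q2).
Proof.
  intros q1 _ e He. exists e. split; [exact He|]. intros q1' _. apply glue_close_l, Hs1.
Qed.

Lemma slice_r_continuous q1 : cfg_continuous (nv G2) N C2 (fun q2 => gl q1 q2).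
Proof.
  intros q2 _ e He. exists (e / 2). split; [lra|]. intros q2' _ H.
  replace e with (2 * (e / 2)) by field. apply glue_close_r; assumption.
Qed.

Section Clopen.
Variable A : (nat -> R * R) -> Prop.
Hypotheses (HS : saturated N C A) (HO : rel_open N C A) (HO' : rel_open N C (fun p => ~ A p)).

Lemma glue_rotate_r q1 q2 c s : C1 q1 -> C2 q2 -> c ^ 2 + s ^ 2 = 1 ->
  A (gl q1 q2) -> A (gl q1 (rot_cfg c s q2)).
Proof.
  intros C1q C2q Hcs Aq. destruct (unit_circle_angle c s Hcs) as [t [<- <-]].
  assert (Crot : forall u, C (gl q1 (rot_cfg (cos u) (sin u) q2))).
  { intros u. apply config_glue; [exact C1q|]. apply config_rot; [apply cos_sin_unit|exact C2q]. }
  apply (R_clopen_full (fun u => A (gl q1 (rot_cfg (cos u) (sin u) q2)))) with 0.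
  - intros x Ax. destruct (HO _ (Crot x) Ax) as [e [He Hq]].
    destruct (glue_rot_continuous (nv G1) s1 t2 (nv G2) q1 q2 x e Ht2 He) as [d [Hd Hu]].
    exists d. split; [exact Hd|]. intros y Hy. apply Hq; auto.
  - intros x Ax. destruct (HO' _ (Crot x) Ax) as [e [He Hq]].
    destruct (glue_rot_continuous (nv G1) s1 t2 (nv G2) q1 q2 x e Ht2 He) as [d [Hd Hu]].
    exists d. split; [exact Hd|]. intros y Hy. apply Hq; auto.
  - apply (saturated_pw _ _ _ (gl q1 q2) _ HS (config_glue _ _ C1q C2q) (Crot 0)); [|exact Aq].
    intros v Hv. apply (glue_ext_r _ _ _ (nv G2)); [exact Ht2| |exact Hv].
    intros u _. unfold rot_cfg. rewrite cos_0, sin_0. point_ring.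
Qed.

Lemma slice_l_saturated q2 : C2 q2 -> saturated (nv G1) C1 (fun q1 => A (gl q1 q2)).
Proof.
  intros C2q q1 q1' C1q C1q' [f [Hf Hq]] Aq.
  destruct (rigid_form f Hf) as [c [s [k [Hcs Hk]]]].
  assert (Hcs' : c ^ 2 + (- s) ^ 2 = 1) by nra.
  assert (C2r : C2 (rot_cfg c s q2)) by (apply config_rot; assumption).
  assert (Hrot : A (gl q1' (rot_cfg c s q2))).
  { apply (HS (gl q1 q2)); [apply config_glue; assumption..| |exact Aq].
    exists f. split; [exact Hf|]. intros v _. rewrite Hk, <- glue_rigid.
    apply glue_ext_l; [exact Hs1|]. intros u Hu. rewrite Hq, Hk by exact Hu. reflexivity. }
  apply (saturated_pw _ _ _ _ _ HS (config_glue _ _ C1q' (config_rot _ _ _ _ _ Hcs' C2r))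
           (config_glue _ _ C1q' C2q)); [|exact (glue_rotate_r _ _ _ _ C1q' C2r Hcs' Hrot)].
  intros v Hv. apply (glue_ext_r _ _ _ (nv G2)); [exact Ht2| |exact Hv].
  intros u _. unfold rot_cfg. rewrite rotp_inv by exact Hcs. reflexivity.
Qed.

Lemma slice_r_saturated q1 : C1 q1 -> saturated (nv G2) C2 (fun q2 => A (gl q1 q2)).
Proof.
  intros C1q q2 q2' C2q C2q' [f [Hf Hq]] Aq.
  destruct (rigid_form f Hf) as [c [s [k [Hcs Hk]]]].
  assert (C2r : C2 (rot_cfg c s q2)) by (apply config_rot; assumption).
  apply (saturated_pw _ _ _ _ _ HS (config_glue _ _ C1q C2r) (config_glue _ _ C1q C2q'));
    [|exact (glue_rotate_r _ _ _ _ C1q C2q Hcs Aq)].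
  intros v Hv. rewrite <- (glue_translate_r _ _ _ q1 (rot_cfg c s q2) k).
  apply (glue_ext_r _ _ _ (nv G2)); [exact Ht2| |exact Hv].
  intros u Hu. rewrite Hq, Hk by exact Hu. reflexivity.
Qed.

Lemma saturated_clopen_full : M_connected (nv G1) C1 -> M_connected (nv G2) C2 ->
  forall p0 p, C p0 -> A p0 -> C p -> A p.
Proof.
  intros HM1 HM2 p0 p Cp0 Ap0 Cp.
  destruct (config_split p0 Cp0) as [C10 C20]. destruct (config_split p Cp) as [C1p C2p].
  set (q20 := fun v => p0 (sm v)) in *. set (q2 := fun v => p (sm v)) in *.
  assert (A0 : A (gl p0 q20)).
  { apply (saturated_pw _ _ _ _ _ HS Cp0 (config_glue _ _ C10 C20)); [|exact Ap0].
    intros v _. apply glue_restrict. }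
  assert (A1 : A (gl p q20)).
  { exact (M_connected_slice _ _ _ _ A (fun q1 => gl q1 q20) HM1 (slice_l_saturated _ C20) HO HO'
             (fun q Cq => config_glue _ _ Cq C20) (slice_l_continuous q20) _ _ C10 A0 C1p). }
  assert (A2 : A (gl p q2)).
  { exact (M_connected_slice _ _ _ _ A (fun q => gl p q) HM2 (slice_r_saturated _ C1p) HO HO'
             (fun q Cq => config_glue _ _ C1p Cq) (slice_r_continuous p) _ _ C20 A1 C2p). }
  apply (saturated_pw _ _ _ _ _ HS (config_glue _ _ C1p C2p) Cp); [|exact A2].
  intros v _. symmetry. apply glue_restrict.
Qed.

End Clopen.

Lemma M_connected_ser : M_connected (nv G1) C1 -> M_connected (nv G2) C2 -> M_connected N C.
Proof.
  intros HM1 HM2 A HS HO HO'.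
  destruct (classic (exists p0, C p0 /\ A p0)) as [[p0 [Cp0 Ap0]]|Hnone].
  - left. intros p Cp. exact (saturated_clopen_full A HS HO HO' HM1 HM2 p0 p Cp0 Ap0 Cp).
  - right. intros p Cp Ap. apply Hnone. exists p. split; assumption.
Qed.

End Series.

Theorem mainTheorem11 (G1 G2 : graph) (s1 t1 s2 t2 : nat) (l1 l2 : list R) :
  ttspg G1 s1 t1 -> ttspg G2 s2 t2 ->
  length l1 = length (edges G1) -> Forall (Rle 0) l1 ->
  length l2 = length (edges G2) -> Forall (Rle 0) l2 ->
  (exists p, config (ser G1 s1 G2 t2) (l1 ++ l2) p) ->
  (M_connected (nv (ser G1 s1 G2 t2)) (config (ser G1 s1 G2 t2) (l1 ++ l2))
   <-> M_connected (nv G1) (config G1 l1) /\ M_connected (nv G2) (config G2 l2)).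
Proof.
  intros T1 T2 Hl1 _ _ _ Hne.
  destruct (ttspg_wf _ _ _ T1) as [Hs1 [_ [_ W1]]].
  destruct (ttspg_wf _ _ _ T2) as [_ [Ht2 [_ W2]]].
  split.
  - intros HM. split.
    + exact (M_connected_ser_l G1 G2 s1 t2 l1 l2 Hs1 Ht2 W1 W2 Hl1 Hne HM).
    + exact (M_connected_ser_r G1 G2 s1 t2 l1 l2 Hs1 Ht2 W1 W2 Hl1 Hne HM).
  - intros [HM1 HM2]. exact (M_connected_ser G1 G2 s1 t2 l1 l2 Hs1 Ht2 W1 W2 Hl1 HM1 HM2).
Qed.
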